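(* For each $t=0,\ldots,T$ and each node $\mu\in\Omega_t$, the set $\mathcal{Z}^{\mathrm{bd}\mu}_t$ from the construction in the context is a polyhedral convex set whose recession cone is $\mathcal{Q}^\mu_t$.
   Context: Finite filtered probability space $(\Omega,\mathcal{F},\mathbb{P};(\mathcal{F}_t)_{t=0}^T)$, $\mathcal{F}_0$ trivial, $\mathcal{F}_T=2^\Omega$, $\mathbb{P}(\{\omega\})>0$. $\Omega_t$: atoms (nodes) of $\mathcal{F}_t$; $\mathrm{succ}\,\mu=\{\nu\in\Omega_{t+1}:\nu\subseteq\mu\}$. $\mathcal{L}_t$: $\mathcal{F}_t$-measurable $\mathbb{R}^d$-valued random variables. $d$ assets, $\mathcal{F}_t$-measurable exchange rates $\pi^{jk}_t>0$, $\pi^{jj}_t=1$. $\mathcal{K}^\mu_t$: convex cone generated by $e^1,\ldots,e^d$ and $\pi^{jk}_t(\mu)e^j-e^k$; $\mathcal{K}_t=\{x\in\mathcal{L}_t:x(\mu)\in\mathcal{K}^\mu_t\ \forall\mu\}$. Deferred solvency cone $\mathcal{Q}_t$: $z\in\mathcal{L}_t$ for which there exist $y_{t+1},\ldots,y_{T+1}$, $y_s\in\mathcal{L}_{s-1}$, $y_{T+1}=0$, with $z-y_{t+1}\in\mathcal{K}_t$, $y_s-y_{s+1}\in\mathcal{K}_s$ ($s=t+1,\ldots,T$); $\mathcal{Q}^\mu_t=\{z(\mu):z\in\mathcal{Q}_t\}$. American option: adapted $\mathbb{R}^d$-valued $\xi=(\xi_t)_{t=0}^T$. The recession cone of a nonempty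 convex $A\subseteq\mathbb{R}^d$ is $\{y: A+\lambda y\subseteq A\ \forall\lambda\ge0\}$. Construction (nodewise): $\mathcal{U}^{\mathrm{bd}\mu}_t=-\xi_t(\mu)+\mathcal{Q}^\mu_t$ for all $t,\mu$; for $\mu\in\Omega_T$, $\mathcal{Z}^{\mathrm{bd}\mu}_T=\mathcal{V}^{\mathrm{bd}\mu}_T=\mathcal{W}^{\mathrm{bd}\mu}_T=\mathcal{U}^{\mathrm{bd}\mu}_T$; backwards for $t<T$, $\mu\in\Omega_t$: $\mathcal{W}^{\mathrm{bd}\mu}_t=\bigcap_{\nu\in\mathrm{succ}\,\mu}\mathcal{Z}^{\mathrm{bd}\nu}_{t+1}$, $\mathcal{V}^{\mathrm{bd}\mu}_t=\mathcal{W}^{\mathrm{bd}\mu}_t+\mathcal{Q}^\mu_t$, $\mathcal{Z}^{\mathrm{bd}\mu}_t=\mathrm{conv}\{\mathcal{U}^{\mathrm{bd}\mu}_t,\mathcal{V}^{\mathrm{bd}\mu}_t\}$ (the smallest convex set containing both). Standing assumption: no arbitrage (no predictable $y$ with $y_0=0$, $y_{T+1}=0$, $y_t-y_{t+1}\in\mathcal{K}_t$ for $t<T$ and $y_T-x\in\mathcal{K}_T$ for a nonzero componentwise non-negative $x\in\mathcal{L}_T$). *)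

From HB Require Import structures.
From mathcomp Require Import all_boot all_order all_algebra.
From mathcomp Require Import reals.
Set Implicit Arguments. Unset Strict Implicit. Unset Printing Implicit Defensive.
Import Order.TTheory GRing.Theory Num.Theory.
Local Open Scope ring_scope.

Section MarketModel.
Variables (R : realType) (Omega : finType) (d : nat).
(* node t w = the atom of F_t containing w *)
Variable node : nat -> Omega -> {set Omega}.
Variable T : nat.
(* exchange rates pi t w j k = pi^{jk}_t(w) *)
Variable pi : nat -> Omega -> 'I_d -> 'I_d -> R.

Definition vset := 'rV[R]_d -> Prop.

Definition isNode (t : nat) (mu : {set Omega}) : Prop := exists w, mu = node t w.
Definition isSucc (t : nat) (mu nu : {set Omega}) : Prop :=
  isNode t.+1 nu /\ nu \subset mu.

Definition adapted {A : Type} (t : nat) (x : Omega -> A) : Prop :=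
  forall w w', w' \in node t w -> x w' = x w.

Definition unitv (j : 'I_d) : 'rV[R]_d := delta_mx 0 j.

Definition Kcone (t : nat) (w : Omega) : vset := fun v =>
  exists (a : 'I_d -> R) (b : 'I_d -> 'I_d -> R),
    (forall j, 0 <= a j) /\ (forall j k, 0 <= b j k) /\
    v = \sum_j a j *: unitv j
        + \sum_j \sum_k b j k *: (pi t w j k *: unitv j - unitv k).

Definition inK (t : nat) (x : Omega -> 'rV[R]_d) : Prop :=
  adapted t x /\ forall w, Kcone t w (x w).

Definition inQ (t : nat) (z : Omega -> 'rV[R]_d) : Prop :=
  adapted t z /\
  exists y : nat -> Omega -> 'rV[R]_d,
    (forall s, (t < s <= T.+1)%N -> adapted s.-1 (y s)) /\
    (forall w, y T.+1 w = 0) /\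
    inK t (fun w => z w - y t.+1 w) /\
    (forall s, (t < s <= T)%N -> inK s (fun w => y s w - y s.+1 w)).

Definition Qnode (t : nat) (mu : {set Omega}) : vset := fun v =>
  exists z, inQ t z /\ exists w, w \in mu /\ z w = v.

Definition convex_set (C : vset) : Prop :=
  forall x y (l : R), C x -> C y -> 0 <= l -> l <= 1 -> C (l *: x + (1 - l) *: y).

Definition conv_hull (A : vset) : vset := fun x =>
  forall C : vset, convex_set C -> (forall y, A y -> C y) -> C x.

Definition dotv (x y : 'rV[R]_d) : R := \sum_j x 0 j * y 0 j.

Definition polyhedral (A : vset) : Prop :=
  exists (n : nat) (a : 'I_n -> 'rV[R]_d) (b : 'I_n -> R),
    forall x, A x <-> (forall i, dotv x (a i) <= b i).

Definition recession_cone (A : vset) : vset := fun y =>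
  forall l : R, 0 <= l -> forall x, A x -> A (x + l *: y).

Variable xi : nat -> Omega -> 'rV[R]_d.

Definition Ubd (t : nat) (mu : {set Omega}) : vset := fun x =>
  exists w q, w \in mu /\ Qnode t mu q /\ x = - xi t w + q.

Fixpoint Zrec (n : nat) (mu : {set Omega}) : vset :=
  match n with
  | 0 => Ubd T mu
  | n'.+1 =>
      let t := (T - n)%N in
      let W : vset := fun x => forall nu, isSucc t mu nu -> Zrec n' nu x in
      let V : vset := fun x => exists w q, W w /\ Qnode t mu q /\ x = w + q in
      conv_hull (fun x => Ubd t mu x \/ V x)
  end.

Definition Zbd (t : nat) (mu : {set Omega}) : vset := Zrec (T - t) mu.

End MarketModel.

From HB Require Import structures.
From mathcomp Require Import all_boot all_order all_algebra.
From mathcomp Require Import reals.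
From mathcomp Require Import lra zify.
From Stdlib Require Import Classical.
Import Order.TTheory GRing.Theory Num.Theory.
Local Open Scope ring_scope.
Set Implicit Arguments. Unset Strict Implicit. Unset Printing Implicit Defensive.

(* Each set of the construction is a polyhedron [{x | A x <= b}], and we carry
   along its homogenisation [{x | A x <= 0}], which is its recession cone as soon
   as it is nonempty.  By Fourier-Motzkin elimination, projections of polyhedra are
   polyhedra (with the projected homogenisation); hence finitely generated cones
   (such as the solvency cones [K^mu_t]), Minkowski sums, finite intersections and
   translates stay in the class.  Backwards in time,
   [Q^mu_t = K^mu_t + \bigcap_nu Q^nu_(t+1)], so [Q^mu_t] is a polyhedral cone, and
   [U^mu_t] and [V^mu_t] are polyhedra with homogenisation [Q^mu_t] (for [V^mu_t]
   because [\bigcap_nu Q^nu_(t+1) + Q^mu_t = Q^mu_t]).  Finally, the convex hull of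
   two polyhedra with the same homogenisation [C] is the projection of
   [{(l, a, x) | 0 <= l <= 1, A1 a <= l b1, A2 (x - a) <= (1 - l) b2}], a polyhedron
   with homogenisation [C]. *)

Section FourierMotzkin.
Variable R : realFieldType.

Definition dotf {V : finType} (a x : V -> R) : R := \sum_v a v * x v.

Lemma dotf0 (V : finType) (x : V -> R) : dotf (fun _ => 0) x = 0.
Proof. by rewrite /dotf big1 // => v _; rewrite mul0r. Qed.

Lemma dotfNl (V : finType) (a x : V -> R) : dotf (fun v => - a v) x = - dotf a x.
Proof. by rewrite /dotf -sumrN; apply: eq_bigr => v _; rewrite mulNr. Qed.

Lemma sumr_delta (I : finType) (p : I) (f : I -> R) :
  \sum_i (i == p)%:R * f i = f p.
Proof.
rewrite (bigD1 p) //= eqxx mul1r big1 ?addr0 // => i /negbTE ->.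
by rewrite mul0r.
Qed.

Lemma dotf_sum (I V : finType) (G : I -> R) (a : I -> V -> R) (x : V -> R) :
  \sum_i G i * dotf (a i) x = dotf (fun v => \sum_i G i * a i v) x.
Proof.
rewrite /dotf; under eq_bigr do rewrite mulr_sumr.
rewrite exchange_big; apply: eq_bigr => v _; rewrite mulr_suml.
by apply: eq_bigr => i _; rewrite mulrA.
Qed.

Lemma sumr_combA (I J K : finType) (G2 : K -> J -> R) (G1 : J -> I -> R)
    (f : I -> R) k :
  \sum_i (\sum_j G2 k j * G1 j i) * f i = \sum_j G2 k j * \sum_i G1 j i * f i.
Proof. exact: esym (dotf_sum (G2 k) G1 f). Qed.

(* Every lower bound [r n / c n] (from [c n < 0]) lies below every upper bound
   [r p / c p] (from [0 < c p]), so the largest lower bound is a solution. *)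
Lemma solve_one_variable (I : finType) (c r : I -> R) :
  (forall i, c i = 0 -> 0 <= r i) ->
  (forall p n, 0 < c p -> c n < 0 -> 0 <= - c n * r p + c p * r n) ->
  exists y, forall i, c i * y <= r i.
Proof.
move=> r_ge0 r_pair.
case: (boolP [exists n, c n < 0]) => [/existsP [n0 cn0]|/existsPn no_neg].
  have [n cn n_max] := @arg_maxP _ _ _ n0 (fun j => c j < 0) (fun j => r j / c j) cn0.
  set y := r n / c n in n_max *.
  have ycn : y * c n = r n by rewrite divfK ?ltr0_neq0.
  exists y => i; case: (ltrgtP (c i) 0) => ci.
  - rewrite -[r i](divfK (ltr0_neq0 ci)) mulrC.
    exact: (ler_wnM2r (ltW ci) (n_max i ci)).
  - by have := r_pair i n ci cn; rewrite -ycn; nra.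
  - by rewrite ci mul0r r_ge0.
exists (- \sum_i `|r i / c i|) => i.
case: (ltrgtP (c i) 0) => ci.
- by have := no_neg i; rewrite ci.
- have le_sum : `|r i / c i| <= \sum_j `|r j / c j|.
    by rewrite (bigD1 i) //= lerDl sumr_ge0.
  have ratioK : `|r i / c i| * c i = `|r i|.
    by rewrite normrM normfV (gtr0_norm ci) divfK ?gt_eqF.
  have r_ge : - `|r i| <= r i by rewrite lerNl -normrN ler_norm.
  move: (\sum_j _) (`|r i / c i|) le_sum ratioK r_ge => S a; nra.
- by rewrite ci mul0r r_ge0.
Qed.

(* The rows of [G] are Fourier-Motzkin combinations of the system [B y <= r]:
   it is solvable iff [G r >= 0]. *)
Definition eliminating (I Y K : finType) (B : I -> Y -> R) (G : K -> I -> R) :=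
  [/\ forall k i, 0 <= G k i,
      forall k j, \sum_i G k i * B i j = 0 &
      forall r, (forall k, 0 <= \sum_i G k i * r i) ->
        exists y, forall i, dotf (B i) y <= r i].

Lemma eliminate_one_variable (I : finType) (c : I -> R) :
  exists (K : finType) (G : K -> I -> R),
    [/\ forall k i, 0 <= G k i, forall k, \sum_i G k i * c i = 0 &
        forall r, (forall k, 0 <= \sum_i G k i * r i) ->
          exists y, forall i, c i * y <= r i].
Proof.
pose G (k : I + I * I) (i : I) : R :=
  match k with
  | inl i0 => if c i0 == 0 then (i == i0)%:R else 0
  | inr (p, n) =>
      if (0 < c p) && (c n < 0) then (i == p)%:R * - c n + (i == n)%:R * c p
      else 0
  end.
have sumG k (f : I -> R) : \sum_i G k i * f i =
  match k with
  | inl i0 => if c i0 == 0 then f i0 else 0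
  | inr (p, n) => if (0 < c p) && (c n < 0) then - c n * f p + c p * f n else 0
  end.
  case: k => [i0|[p n]] /=; case: ifP => _;
    try by rewrite ?sumr_delta ?big1 // => i _; rewrite mul0r.
  by under eq_bigr do rewrite mulrDl -!mulrA; rewrite big_split /= !sumr_delta.
exists (I + I * I)%type, G; split.
- case=> [i0|[p n]] i /=; case: ifP => // /andP[cp cn].
  by rewrite addr_ge0 // mulr_ge0 // ?oppr_ge0 ltW.
- case=> [i0|[p n]]; rewrite sumG; case: ifP => //; first by move/eqP.
  by rewrite mulNr mulrC addrC subrr.
move=> r r_comb; apply: solve_one_variable.
  by move=> i ci; have := r_comb (inl i); rewrite sumG ci eqxx.
by move=> p n cp cn; have := r_comb (inr (p, n)); rewrite sumG cp cn.
Qed.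

Lemma fourier_motzkin_ord n (I : finType) (B : I -> 'I_n -> R) :
  exists (K : finType) (G : K -> I -> R), eliminating B G.
Proof.
elim: n I B => [|n IH] I B.
  exists I, (fun k i => (i == k)%:R); split=> [k i|k [] //|r r_ge0].
    by rewrite ler0n.
  by exists (fun _ => 0) => i; have := r_ge0 i; rewrite sumr_delta /dotf big_ord0.
have [K1 [G1 [G1_ge0 G1c G1_sol]]] := eliminate_one_variable (B^~ ord0).
pose B1 k1 j := \sum_i G1 k1 i * B i (lift ord0 j).
have [K2 [G2 [G2_ge0 G2B1 G2_sol]]] := IH K1 B1.
exists K2, (fun k2 i => \sum_k1 G2 k2 k1 * G1 k1 i); split.
- by move=> k i; apply: sumr_ge0 => k1 _; apply: mulr_ge0.
- move=> k j; rewrite sumr_combA.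
  have [j' ->|->] := unliftP ord0 j; first exact: G2B1.
  by rewrite big1 // => k1 _; rewrite G1c mulr0.
move=> r r_comb.
have [y' y'_sol] : exists y', forall k1, dotf (B1 k1) y' <= \sum_i G1 k1 i * r i.
  by apply: G2_sol => k2; rewrite -sumr_combA.
have [y0 y0_sol] : exists y0, forall i,
    B i ord0 * y0 <= r i - dotf (fun j => B i (lift ord0 j)) y'.
  apply: G1_sol => k1; under eq_bigr do rewrite mulrBr.
  by rewrite sumrB subr_ge0 dotf_sum; apply: y'_sol.
exists (fun j => if unlift ord0 j is Some j' then y' j' else y0) => i.
rewrite /dotf big_ord_recl unlift_none.
under eq_bigr do rewrite liftK.
by rewrite -lerBrDr; apply: y0_sol.
Qed.

Lemma fourier_motzkin (Y I : finType) (B : I -> Y -> R) :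
  exists (K : finType) (G : K -> I -> R), eliminating B G.
Proof.
have [K [G [G_ge0 GB G_sol]]] :=
  fourier_motzkin_ord (fun i (k : 'I_#|Y|) => B i (enum_val k)).
exists K, G; split=> // [k j|r /G_sol [y' y'_sol]].
  by have := GB k (enum_rank j); rewrite enum_rankK.
exists (fun v => y' (enum_rank v)) => i; have := y'_sol i; congr (_ <= _).
rewrite /dotf (reindex (@enum_val Y predT)) /=; last first.
  by apply: onW_bij; exact: enum_val_bij.
by apply: eq_bigr => k _; rewrite enum_valK.
Qed.

Lemma projection_system (X Y I : finType) (Ax : I -> X -> R) (By : I -> Y -> R) :
  exists (K : finType) (A' : K -> X -> R) (L : K -> I -> R),
    forall (b : I -> R) (x : X -> R),
      (exists y, forall i, dotf (Ax i) x + dotf (By i) y <= b i) <->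
      (forall k, dotf (A' k) x <= \sum_i L k i * b i).
Proof.
have [K [G [G_ge0 GB G_sol]]] := fourier_motzkin By.
exists K, (fun k v => \sum_i G k i * Ax i v), G => b x; split.
  move=> [y y_sol] k; rewrite -dotf_sum.
  have GBy : \sum_i G k i * dotf (By i) y = 0.
    by rewrite dotf_sum /dotf big1 // => v _; rewrite GB mul0r.
  apply: le_trans (ler_sum _ (fun i _ => ler_wpM2l (G_ge0 k i) (y_sol i))).
  by under [leRHS]eq_bigr do rewrite mulrDr; rewrite big_split /= GBy addr0.
move=> x_sol.
have [y y_sol] : exists y, forall i, dotf (By i) y <= b i - dotf (Ax i) x.
  apply: G_sol => k; under eq_bigr do rewrite mulrBr.
  by rewrite sumrB subr_ge0 dotf_sum.
by exists y => i; rewrite addrC -lerBrDr.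
Qed.

End FourierMotzkin.

Section Polyhedra.
Variables (R : realType) (d : nat).
Implicit Types (S C : vset R d) (x v : 'rV[R]_d).

Definition coords x : 'I_d -> R := fun j => x 0 j.

Definition hpoly S C : Prop :=
  exists (I : finType) (A : I -> 'I_d -> R) (b : I -> R),
    (forall x, S x <-> forall i, dotf (A i) (coords x) <= b i) /\
    (forall x, C x <-> forall i, dotf (A i) (coords x) <= 0).

Lemma dotf_coords a (f : 'I_d -> R) : dotf a (coords (\row_j f j)) = dotf a f.
Proof. by apply: eq_bigr => j _; rewrite /coords mxE. Qed.

Lemma dotf_coordsD a x y :
  dotf a (coords (x + y)) = dotf a (coords x) + dotf a (coords y).
Proof.
by rewrite /dotf -big_split; apply: eq_bigr => j _; rewrite /coords mxE mulrDr.
Qed.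

Lemma dotf_coordsZ a l x : dotf a (coords (l *: x)) = l * dotf a (coords x).
Proof.
by rewrite /dotf mulr_sumr; apply: eq_bigr => j _; rewrite /coords mxE mulrCA.
Qed.

Lemma dotf_coordsN a x : dotf a (coords (- x)) = - dotf a (coords x).
Proof. by rewrite -scaleN1r dotf_coordsZ mulN1r. Qed.

Lemma dotf_coordsB a x y :
  dotf a (coords (x - y)) = dotf a (coords x) - dotf a (coords y).
Proof. by rewrite dotf_coordsD dotf_coordsN. Qed.

Lemma dotf_coords0 a : dotf a (coords 0) = 0.
Proof. by rewrite -(subrr 0) dotf_coordsB subrr. Qed.

Lemma hpoly_ext S C S' C' :
  hpoly S C -> (forall x, S x <-> S' x) -> (forall x, C x <-> C' x) -> hpoly S' C'.
Proof.
move=> [I [A [b [SE CE]]]] SS' CC'.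
by exists I, A, b; split=> x; rewrite -?SS' -?CC'.
Qed.

Lemma hpoly_polyhedral S C : hpoly S C -> polyhedral S.
Proof.
move=> [I [A [b [SE _]]]].
exists #|I|, (fun k => \row_j A (enum_val k) j), (fun k => b (enum_val k)) => x.
have dotE k : dotv x (\row_j A (enum_val k) j) = dotf (A (enum_val k)) (coords x).
  by apply: eq_bigr => j _; rewrite mxE mulrC.
rewrite SE; split=> [Ax k|Ax i]; first by rewrite dotE.
by have := Ax (enum_rank i); rewrite dotE enum_rankK.
Qed.

Lemma hpoly_recession_cone S C x0 : hpoly S C -> S x0 ->
  forall v, recession_cone S v <-> C v.
Proof.
move=> [I [A [b [SE CE]]]] Sx0 v; rewrite CE; split=> [rec_v i|Av l l_ge0 x Sx].
  rewrite leNgt; apply/negP => Av_gt0.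
  pose l := (b i - dotf (A i) (coords x0) + 1) / dotf (A i) (coords v).
  have Ax0 := (SE x0).1 Sx0 i.
  have l_ge0 : 0 <= l by rewrite divr_ge0 ?ltW //; lra.
  have := (SE _).1 (rec_v l l_ge0 x0 Sx0) i.
  rewrite dotf_coordsD dotf_coordsZ /l divfK ?gt_eqF //; lra.
apply/SE => i; rewrite dotf_coordsD dotf_coordsZ.
have := (SE x).1 Sx i; have := Av i; nra.
Qed.

Lemma hpoly_convex S C : hpoly S C -> convex_set S.
Proof.
move=> [I [A [b [SE _]]]] x y l Sx Sy l_ge0 l_le1; apply/SE => i.
rewrite dotf_coordsD !dotf_coordsZ.
have := (SE x).1 Sx i; have := (SE y).1 Sy i; nra.
Qed.

Lemma hpoly_cone_addr C : hpoly C C -> forall x y, C x -> C y -> C (x + y).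
Proof.
move=> [I [A [b [_ CE]]]] x y Cx Cy; apply/CE => i; rewrite dotf_coordsD.
have := (CE x).1 Cx i; have := (CE y).1 Cy i; lra.
Qed.

Lemma hpoly_setT : hpoly (fun _ => True) (fun _ => True).
Proof.
by exists void, (fun _ _ => 0), (fun _ => 0); split=> x; split=> // _ [].
Qed.

Lemma hpolyI S1 C1 S2 C2 : hpoly S1 C1 -> hpoly S2 C2 ->
  hpoly (fun x => S1 x /\ S2 x) (fun x => C1 x /\ C2 x).
Proof.
move=> [I1 [A1 [b1 [SE1 CE1]]]] [I2 [A2 [b2 [SE2 CE2]]]].
exists (I1 + I2)%type, (fun i => match i with inl i => A1 i | inr i => A2 i end),
  (fun i => match i with inl i => b1 i | inr i => b2 i end).
split=> x; rewrite ?SE1 ?SE2 ?CE1 ?CE2; split=> [[H1 H2]|H];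
  try by case=> i; [apply: H1|apply: H2].
all: by split=> i; [apply: (H (inl i))|apply: (H (inr i))].
Qed.

Lemma hpoly_bigcap (F : finType) (P : F -> Prop) (S C : F -> vset R d) :
  (forall f, P f -> hpoly (S f) (C f)) ->
  hpoly (fun x => forall f, P f -> S f x) (fun x => forall f, P f -> C f x).
Proof.
move=> hpolyF.
suff hpoly_s (s : seq F) : hpoly (fun x => forall f, f \in s -> P f -> S f x)
                                (fun x => forall f, f \in s -> P f -> C f x).
  apply: hpoly_ext (hpoly_s (enum F)) _ _ => x;
    by split=> H f; [apply: H; rewrite mem_enum|move=> _; apply: H].
elim: s => [|f s IH]; first exact: hpoly_ext hpoly_setT _ _.
have hpoly_f : hpoly (fun x => P f -> S f x) (fun x => P f -> C f x).
  have [Pf|nPf] := classic (P f).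
    by apply: hpoly_ext (hpolyF f Pf) _ _ => x; split=> // H; apply: H.
  exact: hpoly_ext hpoly_setT _ _.
apply: hpoly_ext (hpolyI hpoly_f IH) _ _ => x;
  split=> [[Hf Hs] g|H]; rewrite ?in_cons;
  try (by case/orP=> [/eqP ->|/Hs]);
  by split=> [|g gs]; apply: H; rewrite in_cons ?eqxx ?gs ?orbT.
Qed.

Lemma hpoly_projection (Y I : finType) (Ax : I -> 'I_d -> R) (By : I -> Y -> R)
    (b b0 : I -> R) S C :
  (forall i, b0 i = 0) ->
  (forall x, S x <->
     exists y, forall i, dotf (Ax i) (coords x) + dotf (By i) y <= b i) ->
  (forall x, C x <->
     exists y, forall i, dotf (Ax i) (coords x) + dotf (By i) y <= b0 i) ->
  hpoly S C.
Proof.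
move=> b0E SE CE; have [K [A' [L proj]]] := projection_system Ax By.
exists K, A', (fun k => \sum_i L k i * b i); split=> x; first by rewrite SE proj.
rewrite CE proj; split=> H k; have := H k;
  by rewrite big1 // => i _; rewrite b0E mulr0.
Qed.

Lemma hpolyD S1 C1 S2 C2 : hpoly S1 C1 -> hpoly S2 C2 ->
  hpoly (fun x => exists a c, S1 a /\ S2 c /\ x = a + c)
        (fun x => exists a c, C1 a /\ C2 c /\ x = a + c).
Proof.
move=> [I1 [A1 [b1 [SE1 CE1]]]] [I2 [A2 [b2 [SE2 CE2]]]].
pose Ax (i : I1 + I2) := if i is inr i then A2 i else fun _ => 0.
pose By (i : I1 + I2) := match i with inl i => A1 i | inr i => fun j => - A2 i j end.
pose rhs (f1 : I1 -> R) (f2 : I2 -> R) (i : I1 + I2) :=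
  match i with inl i => f1 i | inr i => f2 i end.
have liftE (P1 P2 : vset R d) f1 f2 x :
    (forall a, P1 a <-> forall i, dotf (A1 i) (coords a) <= f1 i) ->
    (forall c, P2 c <-> forall i, dotf (A2 i) (coords c) <= f2 i) ->
    (exists a c, P1 a /\ P2 c /\ x = a + c) <->
    exists y, forall i, dotf (Ax i) (coords x) + dotf (By i) y <= rhs f1 f2 i.
  move=> P1E P2E; split=> [[a [c [/P1E Aa [/P2E Ac ->]]]]|[y Hy]].
    exists (coords a) => -[i|i] /=; first by rewrite dotf0 add0r.
    by rewrite dotfNl dotf_coordsD; have := Ac i; lra.
  exists (\row_j y j), (x - \row_j y j); split; [|split]; last by rewrite addrC subrK.
    by apply/P1E => i; have := Hy (inl i); rewrite /= dotf0 add0r dotf_coords.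
  by apply/P2E => i; have := Hy (inr i); rewrite /= dotfNl dotf_coordsB dotf_coords.
apply: (@hpoly_projection _ _ Ax By (rhs b1 b2) (rhs (fun _ => 0) (fun _ => 0))).
- by case.
- by move=> x; apply: liftE.
- by move=> x; apply: liftE.
Qed.

Lemma hpoly_translate S C v :
  hpoly S C -> hpoly (fun x => exists q, S q /\ x = v + q) C.
Proof.
move=> [I [A [b [SE CE]]]].
exists I, A, (fun i => b i + dotf (A i) (coords v)); split=> // x.
split=> [[q [Sq ->]] i|Ax]; first by rewrite dotf_coordsD; have := (SE q).1 Sq i; lra.
exists (x - v); split; last by rewrite addrC subrK.
by apply/SE => i; rewrite dotf_coordsB; have := Ax i; lra.
Qed.

Definition finite_cone (Y : finType) (g : Y -> 'rV[R]_d) : vset R d :=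
  fun v => exists c : Y -> R, (forall y, 0 <= c y) /\ v = \sum_y c y *: g y.

Lemma hpoly_finite_cone (Y : finType) (g : Y -> 'rV[R]_d) :
  hpoly (finite_cone g) (finite_cone g).
Proof.
pose e l : 'I_d -> R := fun j => (j == l)%:R.
pose Ax (i : Y + 'I_d * bool) := match i with
  | inl _ => fun _ => 0
  | inr (l, true) => e l
  | inr (l, false) => fun j => - e l j end.
pose By (i : Y + 'I_d * bool) := match i with
  | inl y0 => fun y => - (y == y0)%:R
  | inr (l, true) => fun y => - g y 0 l
  | inr (l, false) => fun y => g y 0 l end.
have dotf_e l x : dotf (e l) (coords x) = x 0 l by rewrite /dotf sumr_delta.
have comb_coord (c : Y -> R) l : (\sum_y c y *: g y) 0 l = dotf (fun y => g y 0 l) c.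
  by rewrite summxE; apply: eq_bigr => y _; rewrite mxE mulrC.
have coneE v : finite_cone g v <->
    exists c, forall i, dotf (Ax i) (coords v) + dotf (By i) c <= 0.
  split=> [[c [c_ge0 ->]]|[c Hc]].
    exists c => -[y0|[l []]] /=.
    - by rewrite dotf0 add0r dotfNl /dotf sumr_delta oppr_le0.
    - by rewrite dotf_e comb_coord dotfNl subrr.
    - by rewrite dotfNl dotf_e comb_coord addrC subrr.
  exists c; split.
    move=> y; have := Hc (inl y).
    by rewrite /= dotf0 add0r dotfNl /dotf sumr_delta oppr_le0.
  apply/rowP => l; rewrite comb_coord; apply/eqP; rewrite eq_le.
  have := Hc (inr (l, true)); have := Hc (inr (l, false)).
  by rewrite /= !dotfNl dotf_e !subr_le0 addrC subr_le0 => -> ->.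
exact: (@hpoly_projection _ _ Ax By (fun _ => 0) (fun _ => 0)).
Qed.

Lemma conv_hullW (A : vset R d) x : A x -> conv_hull A x.
Proof. by move=> Ax C _; apply. Qed.

Lemma conv_hullS (A B : vset R d) x :
  (forall y, A y -> B y) -> conv_hull A x -> conv_hull B x.
Proof. by move=> AB Ax C C_convex BC; apply: Ax => // y /AB /BC. Qed.

Lemma conv_hull_convex (A : vset R d) : convex_set (conv_hull A).
Proof.
move=> x y l Ax Ay l_ge0 l_le1 C C_convex AC.
exact: C_convex (Ax C C_convex AC) (Ay C C_convex AC) l_ge0 l_le1.
Qed.

Section ConvexHullUnion.
Variables (I1 I2 : finType) (A1 : I1 -> 'I_d -> R) (A2 : I2 -> 'I_d -> R).
Variables (b1 : I1 -> R) (b2 : I2 -> R).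

Let S1 x := forall i, dotf (A1 i) (coords x) <= b1 i.
Let S2 x := forall i, dotf (A2 i) (coords x) <= b2 i.
Let C1 x := forall i, dotf (A1 i) (coords x) <= 0.
Let C2 x := forall i, dotf (A2 i) (coords x) <= 0.
Hypothesis C1E : forall x, C1 x <-> C2 x.

(* [mix 1] is the convex hull of [S1 \/ S2] (with [a = l a1], [x - a = (1 - l) a2])
   and [mix 0] is the common homogenisation. *)
Definition mix (e : R) x := exists l a, [/\ 0 <= l <= e,
  forall i, dotf (A1 i) (coords a) <= l * b1 i &
  forall i, dotf (A2 i) (coords (x - a)) <= (e - l) * b2 i].

Definition cons_coef (c : R) (f : 'I_d -> R) : 'I_d.+1 -> R :=
  fun j => if unlift ord0 j is Some j' then f j' else c.

Lemma dotf_cons_coef c f (y : 'I_d.+1 -> R) :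
  dotf (cons_coef c f) y = c * y ord0 + dotf f (coords (\row_j y (lift ord0 j))).
Proof.
rewrite /dotf big_ord_recl /cons_coef unlift_none; congr (_ + _).
by apply: eq_bigr => j _; rewrite liftK /coords mxE.
Qed.

Lemma cons_coef_ord0 c f : cons_coef c f ord0 = c.
Proof. by rewrite /cons_coef unlift_none. Qed.

Lemma row_cons_coef c x : \row_j cons_coef c (coords x) (lift ord0 j) = x.
Proof. by apply/rowP => j; rewrite mxE /cons_coef liftK. Qed.

Lemma hpoly_mix : hpoly (mix 1) (mix 0).
Proof.
pose I := ((I1 + I2) + bool)%type.
pose Ax (i : I) := if i is inl (inr i) then A2 i else fun _ => 0.
pose By (i : I) := match i with
  | inl (inl i) => cons_coef (- b1 i) (A1 i)
  | inl (inr i) => cons_coef (b2 i) (fun j => - A2 i j)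
  | inr false => cons_coef (-1) (fun _ => 0)
  | inr true => cons_coef 1 (fun _ => 0) end.
pose rhs (e : R) (i : I) := match i with
  | inl (inr i) => e * b2 i | inr true => e | _ => 0 end.
have mixE e x : mix e x <->
    exists y, forall i, dotf (Ax i) (coords x) + dotf (By i) y <= rhs e i.
  split=> [[l [a [/andP[l_ge0 l_le] Aa Axa]]]|[y Hy]].
    exists (cons_coef l (coords a)).
    case=> [[i|i]|[]] /=;
      rewrite dotf_cons_coef cons_coef_ord0 row_cons_coef ?dotf0 ?add0r.
    - by have := Aa i; lra.
    - by rewrite dotfNl; have := Axa i; rewrite dotf_coordsB; lra.
    - by lra.
    - by lra.
  exists (y ord0), (\row_j y (lift ord0 j)); split.
  - have := Hy (inr false); have := Hy (inr true).
    by rewrite /= !dotf0 !add0r !dotf_cons_coef !dotf0 => ? ?; apply/andP; split; lra.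
  - move=> i; have := Hy (inl (inl i)).
    by rewrite /= dotf0 add0r dotf_cons_coef; lra.
  - move=> i; have := Hy (inl (inr i)).
    by rewrite /= dotf_cons_coef dotfNl dotf_coordsB; lra.
apply: (@hpoly_projection _ _ Ax By (rhs 1) (rhs 0)) => //.
by case=> [[i|i]|[]] //=; rewrite mul0r.
Qed.

Lemma mix0E x : mix 0 x <-> C1 x.
Proof.
split=> [[l [a [l_00 Aa Axa]]]|C1x]; last first.
  exists 0, x; split=> [|i|i]; first by rewrite lexx.
    by rewrite mul0r; apply: C1x.
  by rewrite !subrr dotf_coords0 mul0r.
have l0 : l = 0 by apply/le_anti; rewrite andbC.
have C2xa : C2 (x - a) by move=> i; have := Axa i; rewrite l0 subrr mul0r.
move=> i; have := (C1E _).2 C2xa i; have := Aa i.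
by rewrite l0 mul0r dotf_coordsB; lra.
Qed.

Lemma hull_sub_mix1 x : conv_hull (fun x => S1 x \/ S2 x) x -> mix 1 x.
Proof.
apply; first exact: hpoly_convex hpoly_mix.
move=> y [S1y|S2y].
  exists 1, y; split=> [|i|i]; first by rewrite lexx ler01.
    by rewrite mul1r; apply: S1y.
  by rewrite !subrr dotf_coords0 mul0r.
exists 0, 0; split=> [|i|i]; first by rewrite lexx ler01.
  by rewrite dotf_coords0 mul0r.
by rewrite !subr0 mul1r; apply: S2y.
Qed.

Lemma mix1_sub_hull x : mix 1 x -> conv_hull (fun x => S1 x \/ S2 x) x.
Proof.
move=> [l [a [/andP[l_ge0 l_le1] Aa Axa]]].
have [l0|l_neq0] := eqVneq l 0.
  have C2a : C2 a by apply/C1E => i; have := Aa i; rewrite l0 mul0r.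
  apply: conv_hullW; right => i; have := C2a i; have := Axa i.
  by rewrite l0 subr0 mul1r dotf_coordsB; lra.
have [l1|l_neq1] := eqVneq l 1.
  have C1xa : C1 (x - a) by apply/C1E => i; have := Axa i; rewrite l1 subrr mul0r.
  apply: conv_hullW; left => i; have := C1xa i; have := Aa i.
  by rewrite l1 mul1r dotf_coordsB; lra.
have l_gt0 : 0 < l by rewrite lt_def l_neq0.
have l_lt1 : 0 < 1 - l by rewrite subr_gt0 lt_neqAle l_neq1.
have -> : x = l *: (l^-1 *: a) + (1 - l) *: ((1 - l)^-1 *: (x - a)).
  by rewrite !scalerA !mulfV ?gt_eqF // !scale1r addrC subrK.
apply: conv_hull_convex => //; apply: conv_hullW; [left|right] => i;
  by rewrite dotf_coordsZ ler_pdivrMl.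
Qed.

End ConvexHullUnion.

Lemma hpoly_conv_hullU S1 C1 S2 C2 : hpoly S1 C1 -> hpoly S2 C2 ->
  (forall x, C1 x <-> C2 x) -> hpoly (conv_hull (fun x => S1 x \/ S2 x)) C1.
Proof.
move=> [I1 [A1 [b1 [SE1 CE1]]]] [I2 [A2 [b2 [SE2 CE2]]]] C1E.
have CE x : (forall i, dotf (A1 i) (coords x) <= 0) <->
            (forall i, dotf (A2 i) (coords x) <= 0) by rewrite -CE1 -CE2.
apply: hpoly_ext (hpoly_mix A1 A2 b1 b2) _ _ => x; last by rewrite mix0E // CE1.
have SE x' : S1 x' \/ S2 x' <->
    (forall i, dotf (A1 i) (coords x') <= b1 i) \/
    (forall i, dotf (A2 i) (coords x') <= b2 i).
  by rewrite SE1 SE2.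
split=> [/(mix1_sub_hull CE)|hull_x]; first by apply: conv_hullS => y /SE.
by apply: hull_sub_mix1; apply: conv_hullS hull_x => y /SE.
Qed.

End Polyhedra.

Section MarketModel.
Variables (R : realType) (Omega : finType) (d T : nat).
Variable node : nat -> Omega -> {set Omega}.
Variable pi : nat -> Omega -> 'I_d -> 'I_d -> R.
Variable xi : nat -> Omega -> 'rV[R]_d.
Hypothesis node_in : forall t w, w \in node t w.
Hypothesis node_part : forall t w w', w' \in node t w -> node t w' = node t w.
Hypothesis node_refine : forall t w, (t < T)%N -> node t.+1 w \subset node t w.
Hypothesis pi_adapted : forall t j k, (t <= T)%N -> adapted node t (fun w => pi t w j k).
Hypothesis xi_adapted : forall t, (t <= T)%N -> adapted node t (xi t).

Local Notation adapted := (adapted node).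
Local Notation inK := (inK node pi).
Local Notation Q := (Qnode node T pi).
Local Notation succ := (isSucc node).

Lemma node_mem t w w0 : (w \in node t w0) = (node t w == node t w0).
Proof. by apply/idP/eqP => [/node_part //|<-]. Qed.

Lemma adapted_mem t w0 : adapted t (fun w => w \in node t w0).
Proof. by move=> w w' /node_part ww'; rewrite !node_mem ww'. Qed.

Lemma node_subset t1 t2 w : (t1 <= t2 <= T)%N -> node t2 w \subset node t1 w.
Proof.
move=> /andP[]; elim: t2 => [|t2 IH]; first by rewrite leqn0 => /eqP ->.
rewrite leq_eqVlt => /orP[/eqP -> //|t12 t2T].
exact: subset_trans (node_refine _ t2T) (IH t12 (ltnW t2T)).
Qed.

Lemma adapted_le {A : Type} t1 t2 (x : Omega -> A) :
  (t1 <= t2 <= T)%N -> adapted t1 x -> adapted t2 x.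
Proof. by move=> t12 x_ad w w' /(subsetP (node_subset w t12)); apply: x_ad. Qed.

Lemma adaptedB t (f g : Omega -> 'rV[R]_d) :
  adapted t f -> adapted t g -> adapted t (fun w => f w - g w).
Proof. by move=> f_ad g_ad w w' ww'; rewrite (f_ad _ _ ww') (g_ad _ _ ww'). Qed.

Lemma adapted_if {A : Type} t (b : Omega -> bool) (f g : Omega -> A) :
  adapted t b -> adapted t f -> adapted t g ->
  adapted t (fun w => if b w then f w else g w).
Proof.
by move=> b_ad f_ad g_ad w w' ww'; rewrite (b_ad _ _ ww') (f_ad _ _ ww') (g_ad _ _ ww').
Qed.

Lemma Kcone0 t w : Kcone pi t w 0.
Proof.
exists (fun _ => 0), (fun _ _ => 0); split=> //; split=> //.
by rewrite !big1 ?addr0 // => j _; rewrite ?big1 ?scale0r // => k _; rewrite scale0r.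
Qed.

Lemma Kcone_node t w w0 v : (t <= T)%N -> w \in node t w0 ->
  Kcone pi t w v <-> Kcone pi t w0 v.
Proof.
move=> tT w_w0; have piE j k : pi t w j k = pi t w0 j k.
  by apply: (pi_adapted j k tT); rewrite -(node_part w_w0).
have combE (b : 'I_d -> 'I_d -> R) :
    \sum_j \sum_k b j k *: (pi t w j k *: unitv R j - unitv R k) =
    \sum_j \sum_k b j k *: (pi t w0 j k *: unitv R j - unitv R k).
  by apply: eq_bigr => j _; apply: eq_bigr => k _; rewrite piE.
by split=> -[a [b [a_ge0 [b_ge0 ->]]]]; exists a, b; rewrite ?combE.
Qed.

(* A deferred liquidation schedule after time [t]: the portfolios [y s]
   ([t < s <= T + 1]) that remain to be liquidated from time [s - 1] on. *)
Definition deferred t (y : nat -> Omega -> 'rV[R]_d) : Prop :=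
  [/\ forall s, (t < s <= T.+1)%N -> adapted s.-1 (y s),
      forall w, y T.+1 w = 0 &
      forall s, (t < s <= T)%N -> inK s (fun w => y s w - y s.+1 w)].

Lemma inQE t z : inQ node T pi t z <->
  adapted t z /\ exists y, deferred t y /\ inK t (fun w => z w - y t.+1 w).
Proof.
split=> [[z_ad [y [y_ad [yT [zy y_K]]]]]|[z_ad [y [[y_ad yT y_K] zy]]]].
  by split=> //; exists y.
by split=> //; exists y.
Qed.

Lemma deferred0 t : deferred t (fun _ _ => 0).
Proof. by split=> // s _; split=> // w; rewrite subr0; apply: Kcone0. Qed.

Lemma deferredS t y : deferred t y -> deferred t.+1 y.
Proof.
case=> y_ad yT y_K; split=> // s /andP[ts sT].
  by apply: y_ad; rewrite sT ltnW.
by apply: y_K; rewrite sT ltnW.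
Qed.

Lemma Qnode0 t w0 : Q t (node t w0) 0.
Proof.
exists (fun _ => 0); split; last by exists w0.
apply/inQE; split=> //; exists (fun _ _ => 0); split; first exact: deferred0.
by split=> // w; rewrite subr0; apply: Kcone0.
Qed.

Lemma QnodeT w0 v : Q T (node T w0) v <-> Kcone pi T w0 v.
Proof.
split=> [[z [/inQE[_ [y [[_ yT _] [_ zy_K]]]] [w [w_w0 <-]]]]|v_K].
  by have := zy_K w; rewrite yT subr0 (Kcone_node _ (leqnn T) w_w0).
pose z w := if w \in node T w0 then v else 0.
exists z; split; last by exists w0; rewrite /z node_in.
have z_ad : adapted T z by apply: adapted_if => //; apply: adapted_mem.
apply/inQE; split=> //; exists (fun _ _ => 0); split; first exact: deferred0.
split=> [|w]; first exact: adaptedB.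
rewrite subr0 /z; case: ifP => [w_w0|_]; last exact: Kcone0.
by rewrite (Kcone_node _ (leqnn T) w_w0).
Qed.

Lemma succ_node t w0 w : (t < T)%N -> w \in node t w0 ->
  succ t (node t w0) (node t.+1 w).
Proof.
move=> tT w_w0; split; first by exists w.
by rewrite -(node_part w_w0); apply: node_refine.
Qed.

Lemma Qnode_split t w0 v : (t < T)%N -> Q t (node t w0) v ->
  exists k u, Kcone pi t w0 k /\
    (forall nu, succ t (node t w0) nu -> Q t.+1 nu u) /\ v = k + u.
Proof.
move=> tT [z [/inQE[z_ad [y [y_def [_ zy_K]]]] [w1 [w1_w0 <-]]]].
have [y_ad _ y_K] := y_def.
have y1_ad : adapted t (y t.+1) by apply: (y_ad t.+1); rewrite ltnS leqnn ltnW.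
exists (z w1 - y t.+1 w1), (y t.+1 w1); split; [|split; last by rewrite subrK].
  by rewrite -(Kcone_node _ (ltnW tT) w1_w0).
move=> nu [[w2 ->] nu_sub]; exists (y t.+1); split; last first.
  exists w2; split=> //; apply: y1_ad; rewrite (node_part w1_w0).
  exact: subsetP nu_sub _ (node_in _ _).
apply/inQE; split; first by apply: adapted_le y1_ad; rewrite leqnSn.
by exists y; split; [apply: deferredS|apply: y_K; rewrite leqnn].
Qed.

Section Glue.
Variables (t : nat) (w0 : Omega) (u : 'rV[R]_d).
Variable y : {set Omega} -> nat -> Omega -> 'rV[R]_d.
Hypothesis tT : (t < T)%N.
Local Notation mu := (node t w0).
Hypothesis y_def : forall nu, succ t mu nu -> deferred t.+1 (y nu).
Hypothesis y_K : forall nu, succ t mu nu ->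
  forall w, w \in nu -> Kcone pi t.+1 w (u - y nu t.+2 w).

Definition glued s w :=
  if w \in mu then (if s == t.+1 then u else y (node t.+1 w) s w) else 0.

Lemma glued_adapted s : (t < s <= T.+1)%N -> adapted s.-1 (glued s).
Proof.
move=> /andP[ts sT] w w' ww'.
have w'_t : w' \in node t w by apply: subsetP (node_subset w _) _ ww'; lia.
rewrite /glued (adapted_mem w0 w'_t); case: ifP => // w_mu.
case: eqP => // /eqP s_neq.
have w'_t1 : w' \in node t.+1 w by apply: subsetP (node_subset w _) _ ww'; lia.
rewrite (node_part w'_t1).
by have [y_ad _ _] := y_def (succ_node tT w_mu); apply: y_ad => //; lia.
Qed.

Lemma deferred_glued : deferred t glued.
Proof.
split=> [|w|s /andP[ts sT]]; first exact: glued_adapted.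
  rewrite /glued; case: ifP => // w_mu; rewrite eqSS gtn_eqF //.
  by have [_ -> _] := y_def (succ_node tT w_mu).
split=> [|w].
  apply: adaptedB; last by apply: (@glued_adapted s.+1); lia.
  by apply: (@adapted_le _ s.-1); [lia|apply: glued_adapted; lia].
rewrite /glued; case: ifP => [w_mu|_]; last by rewrite subrr; apply: Kcone0.
have nu_succ := succ_node tT w_mu; rewrite eqSS (gtn_eqF ts).
case: eqP => [->|/eqP s_neq]; first exact: y_K nu_succ _ (node_in _ _).
have [_ _ yK] := y_def nu_succ; apply: (yK s _).2; lia.
Qed.

End Glue.

Lemma Qnode_glue t w0 k u : (t < T)%N -> Kcone pi t w0 k ->
  (forall nu, succ t (node t w0) nu -> Q t.+1 nu u) -> Q t (node t w0) (k + u).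
Proof.
move=> tT k_K u_Q.
pose certifies nu (ynu : nat -> Omega -> 'rV[R]_d) := succ t (node t w0) nu ->
  deferred t.+1 ynu /\ forall w, w \in nu -> Kcone pi t.+1 w (u - ynu t.+2 w).
have [y y_succ] : exists y, forall nu, certifies nu (y nu).
  apply: fin_all_exists => nu; have [nu_succ|] := classic (succ t (node t w0) nu);
    last by exists (fun _ _ => 0).
  have [z [/inQE[z_ad [y [y_def zy_K]]] [w1 [w1_nu z_u]]]] := u_Q nu nu_succ.
  exists y => _; split=> // w w_nu.
  have [[w2 nuE] _] := nu_succ; rewrite nuE in w_nu w1_nu.
  by rewrite -z_u (z_ad _ _ w1_nu) -(z_ad _ _ w_nu); apply: zy_K.2.
pose z w := if w \in node t w0 then k + u else 0.
exists z; split; last by exists w0; rewrite /z node_in.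
have z_ad : adapted t z by apply: adapted_if => //; apply: adapted_mem.
have y_def nu : succ t (node t w0) nu -> deferred t.+1 (y nu) by case/y_succ.
apply/inQE; split=> //; exists (glued t w0 u y); split.
  by apply: deferred_glued => // nu /y_succ[].
split=> [|w].
  by apply: adaptedB => //; apply: (glued_adapted u tT y_def (s := t.+1)); lia.
rewrite /z /glued eqxx; case: ifP => [w_w0|_]; last by rewrite subrr; apply: Kcone0.
by rewrite addrK (Kcone_node _ (ltnW tT) w_w0).
Qed.

Lemma Qnode_step t w0 v : (t < T)%N -> Q t (node t w0) v <->
  exists k u, Kcone pi t w0 k /\
    (forall nu, succ t (node t w0) nu -> Q t.+1 nu u) /\ v = k + u.
Proof.
move=> tT; split; first exact: Qnode_split.
by move=> [k [u [k_K [u_Q ->]]]]; apply: Qnode_glue.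
Qed.

Definition Kgen t w (g : 'I_d + 'I_d * 'I_d) : 'rV[R]_d :=
  match g with
  | inl j => unitv R j
  | inr (j, k) => pi t w j k *: unitv R j - unitv R k
  end.

Lemma Kcone_finite_cone t w v : Kcone pi t w v <-> finite_cone (Kgen t w) v.
Proof.
have combE (c : 'I_d + 'I_d * 'I_d -> R) : \sum_g c g *: Kgen t w g =
    \sum_j c (inl j) *: unitv R j +
    \sum_j \sum_k c (inr (j, k)) *: (pi t w j k *: unitv R j - unitv R k).
  by rewrite big_sumType pair_big /=; congr (_ + _); apply: eq_bigr => -[j k].
split=> [[a [b [a_ge0 [b_ge0 ->]]]]|[c [c_ge0 ->]]].
  exists (fun g => match g with inl j => a j | inr (j, k) => b j k end).
  by split=> [[j|[j k]]|]; [apply: a_ge0|apply: b_ge0|rewrite combE].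
exists (fun j => c (inl j)), (fun j k => c (inr (j, k))).
by split=> [j|]; [apply: c_ge0|split=> [j k|]; [apply: c_ge0|rewrite combE]].
Qed.

Lemma hpoly_Kcone t w : hpoly (Kcone pi t w) (Kcone pi t w).
Proof.
by apply: hpoly_ext (hpoly_finite_cone (Kgen t w)) _ _ => v; rewrite Kcone_finite_cone.
Qed.

Lemma hpoly_Qnode t w0 : (t <= T)%N -> hpoly (Q t (node t w0)) (Q t (node t w0)).
Proof.
move=> /subnK; move: (T - t)%N => n; elim: n t w0 => [|n IH] t w0.
  by rewrite add0n => ->; apply: hpoly_ext (hpoly_Kcone T w0) _ _ => v; rewrite QnodeT.
move=> tE; have tT : (t < T)%N by lia.
have hpoly_succ : hpoly (fun x => forall nu, succ t (node t w0) nu -> Q t.+1 nu x)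
                        (fun x => forall nu, succ t (node t w0) nu -> Q t.+1 nu x).
  by apply: hpoly_bigcap => _ [[w ->] _]; apply: IH; rewrite addnS.
apply: hpoly_ext (hpolyD (hpoly_Kcone t w0) hpoly_succ) _ _ => v;
  by rewrite Qnode_step.
Qed.

Lemma Qnode_add_succ t w0 x : (t < T)%N -> Q t (node t w0) x <->
  exists a c, (forall nu, succ t (node t w0) nu -> Q t.+1 nu a) /\
              Q t (node t w0) c /\ x = a + c.
Proof.
move=> tT; split=> [Qx|[a [c [a_Q [/(Qnode_split tT)[k [u [k_K [u_Q ->]]]] ->]]]]].
  by exists 0, x; split=> [_ [[w ->] _]|]; [apply: Qnode0|rewrite add0r].
rewrite addrCA; apply: Qnode_glue => // nu nu_succ.
have [[w nuE] _] := nu_succ; rewrite nuE in nu_succ *.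
by apply: hpoly_cone_addr; [apply: hpoly_Qnode|apply: a_Q|apply: u_Q].
Qed.

Local Notation U := (Ubd node T pi xi).
Local Notation Z := (Zrec node T pi xi).

Lemma hpoly_Ubd t w0 : (t <= T)%N -> hpoly (U t (node t w0)) (Q t (node t w0)).
Proof.
move=> tT; apply: hpoly_ext (hpoly_translate (- xi t w0) (hpoly_Qnode w0 tT)) _ _ => // x.
split=> [[q [Qq ->]]|[w [q [w_w0 [Qq ->]]]]]; first by exists w0, q.
by exists q; rewrite (xi_adapted tT w_w0).
Qed.

Lemma Zrec_Ubd n mu x : U (T - n) mu x -> Z n mu x.
Proof. by case: n => [|n] /=; rewrite ?subn0 // => Ux; apply: conv_hullW; left. Qed.

Lemma hpoly_Zrec n w0 : (n <= T)%N ->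
  hpoly (Z n (node (T - n) w0)) (Q (T - n) (node (T - n) w0)).
Proof.
elim: n w0 => [|n IH] w0 nT; first by rewrite subn0; apply: hpoly_Ubd.
set t := (T - n.+1)%N; have tT : (t < T)%N by rewrite /t; lia.
have tE : t.+1 = (T - n)%N by rewrite /t; lia.
have hpoly_W : hpoly (fun x => forall nu, succ t (node t w0) nu -> Z n nu x)
                     (fun x => forall nu, succ t (node t w0) nu -> Q t.+1 nu x).
  by apply: hpoly_bigcap => _ [[w ->] _]; rewrite tE; apply: IH; lia.
have hpoly_V := hpolyD hpoly_W (hpoly_Qnode w0 (ltnW tT)).
apply: hpoly_conv_hullU (hpoly_Ubd w0 (ltnW tT)) hpoly_V _ => x.
by rewrite Qnode_add_succ.
Qed.

End MarketModel.

Unset Implicit Arguments.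

Theorem proposition5p2
  (R : realType) (Omega : finType) (d T : nat)
  (node : nat -> Omega -> {set Omega})
  (P : Omega -> R)
  (pi : nat -> Omega -> 'I_d -> 'I_d -> R)
  (xi : nat -> Omega -> 'rV[R]_d)
  (Hnode_in : forall t w, w \in node t w)
  (Hnode_part : forall t w w', w' \in node t w -> node t w' = node t w)
  (Hnode_refine : forall t w, (t < T)%N -> node t.+1 w \subset node t w)
  (Hnode0 : forall w, node 0%N w = [set: Omega])
  (HnodeT : forall w, node T w = [set w])
  (HP_pos : forall w, 0 < P w)
  (HP_sum : \sum_w P w = 1)
  (Hpi_pos : forall t w j k, (t <= T)%N -> 0 < pi t w j k)
  (Hpi_diag : forall t w j, (t <= T)%N -> pi t w j j = 1)
  (Hpi_adapt : forall t j k, (t <= T)%N ->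
      adapted node t (fun w => pi t w j k))
  (Hxi_adapt : forall t, (t <= T)%N -> adapted node t (xi t))
  (HNA : ~ exists (y : nat -> Omega -> 'rV[R]_d) (x : Omega -> 'rV[R]_d),
      (forall s, (1 <= s <= T.+1)%N -> adapted node s.-1 (y s)) /\
      (forall w, y 0%N w = 0) /\ (forall w, y T.+1 w = 0) /\
      (forall t, (t < T)%N -> inK node pi t (fun w => y t w - y t.+1 w)) /\
      inK node pi T (fun w => y T w - x w) /\
      adapted node T x /\
      (forall w j, 0 <= x w 0 j) /\ (exists w, x w != 0)) :
  forall t mu, (t <= T)%N -> isNode node t mu ->
    polyhedral (Zbd node T pi xi t mu) /\
    (forall v, recession_cone (Zbd node T pi xi t mu) v <-> Qnode node T pi t mu v).
Proof.
move=> t _ tT [w0 ->].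
have := hpoly_Zrec Hnode_in Hnode_part Hnode_refine Hpi_adapt Hxi_adapt w0 (leq_subr t T).
rewrite subKn // => Z_hpoly.
have Z_x0 : Zbd node T pi xi t (node t w0) (- xi t w0 + 0).
  apply: Zrec_Ubd; rewrite subKn //.
  by exists w0, 0; split=> //; split=> //; apply: Qnode0.
split; first exact: hpoly_polyhedral Z_hpoly.
exact: hpoly_recession_cone Z_hpoly Z_x0.
Qed.
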